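(* Let $n\ge 1$, $F\in\mathbb{R}[z_1,\dots,z_n]$, and let $Y=\{(z,u)\in\mathbb{C}^{n+1}: F(z)+u=0\}$. Put $$\psi(x,t,z,u)=\Big(\langle x'-z,d_zF(z)\rangle+x_{n+1}-u\Big)^2-t^2\Big(1+\sum_{j=1}^n\big(\tfrac{\partial F}{\partial z_j}(z)\big)^2\Big),$$ for $x=(x',x_{n+1})\in\mathbb{C}^{n+1}$, $x'=(x_1,\dots,x_n)$, $t\in\mathbb{C}$, and let $$\pi:\ \Sigma:=\{(x,t,z,u)\in\mathbb{C}^{n+2}\times\mathbb{C}^{n+1}:\ (z,u)\in Y,\ \psi(x,t,z,u)=0\}\to\mathbb{C}^{n+2},\qquad (x,t,z,u)\mapsto (x,t).$$ If $x\in W_t$, then $(x,t)$ belongs to the critical value set of $\pi$.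
   Context: $\langle a,b\rangle=\sum_j a_jb_j$ and $d_zF=(\partial F/\partial z_1,\dots,\partial F/\partial z_n)$. $\psi$ is the product $\psi_+\psi_-$ of the two phase functions $\psi_\pm=(\langle x'-z,d_zF(z)\rangle+x_{n+1}-u)\pm t\,|(d_zF(z),1)|$, where $|(d_zF(z),1)|$ denotes a square root of $1+\sum_j(\partial F/\partial z_j)^2$. The wave front $W_t\subset\mathbb{C}^{n+1}$ at time $t$ with initial front $Y$ is the set of points $x=(x_1,\dots,x_{n+1})$ of the form $x_j=\pm t\,\frac{1}{|(d_zF(z),1)|}\frac{\partial F}{\partial z_j}(z)+z_j$ ($1\le j\le n$), $x_{n+1}=\pm t\,\frac{1}{|(d_zF(z),1)|}+u$, for some $(z,u)\in Y$ (same sign choice throughout). The critical value set of $\pi$ is the image under $\pi$ of the set of points of $\Sigma$ at which $\pi|_\Sigma$ fails to be a submersion (including singular points of $\Sigma$). *)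

From mathcomp Require Import all_boot all_algebra.
From mathcomp Require Import mpoly complex reals.
Set Implicit Arguments. Unset Strict Implicit. Unset Printing Implicit Defensive.
Import GRing.Theory Num.Theory.
Local Open Scope ring_scope.

Section WaveFront.
Variable R : realType.
Local Notation C := (complex R).
Variable n : nat.

(* Ambient space C^{n+2} x C^{n+1} = C^N with N = (n+2)+(n+1).
   Coordinates 0..n   : x_1..x_{n+1};   coordinate n+1 : t;
   coordinates n+2..2n+1 : z_1..z_n;   coordinate 2n+2 : u. *)
Definition Ndim := (n.+2 + n.+1)%N.

Definition xidx (j : 'I_n.+1) : 'I_Ndim := lshift n.+1 (widen_ord (leqnSn n.+1) j).
Definition tidx : 'I_Ndim := lshift n.+1 ord_max.
Definition zidx (j : 'I_n) : 'I_Ndim := rshift n.+2 (widen_ord (leqnSn n) j).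
Definition uidx : 'I_Ndim := rshift n.+2 ord_max.

Definition xpidx (j : 'I_n) : 'I_n.+1 := widen_ord (leqnSn n) j.

Definition FC (F : {mpoly R[n]}) : {mpoly C[n]} := map_mpoly (real_complex R) F.

Definition zvars : n.-tuple {mpoly C[Ndim]} := [tuple 'X_(zidx j) | j < n].

Definition Fz (F : {mpoly R[n]}) : {mpoly C[Ndim]} := FC F \mPo zvars.
Definition dFz (F : {mpoly R[n]}) (j : 'I_n) : {mpoly C[Ndim]} :=
  (mderiv j (FC F)) \mPo zvars.

Definition G_Y (F : {mpoly R[n]}) : {mpoly C[Ndim]} := Fz F + 'X_uidx.

Definition psi (F : {mpoly R[n]}) : {mpoly C[Ndim]} :=
  (\sum_(j < n) ('X_(xidx (xpidx j)) - 'X_(zidx j)) * dFz F j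
     + 'X_(xidx ord_max) - 'X_uidx) ^+ 2
  - 'X_tidx ^+ 2 * (1 + \sum_(j < n) dFz F j ^+ 2).

Definition Geq (F : {mpoly R[n]}) (k : 'I_2) : {mpoly C[Ndim]} :=
  if k == ord0 then G_Y F else psi F.

Definition Sigma (F : {mpoly R[n]}) (p : 'I_Ndim -> C) : Prop :=
  forall k : 'I_2, (Geq F k).@[p] = 0.

Definition jacSigma (F : {mpoly R[n]}) (p : 'I_Ndim -> C) : 'M[C]_(2, Ndim) :=
  \matrix_(k < 2, i < Ndim) (mderiv i (Geq F k)).@[p].

Definition singular_pt (F : {mpoly R[n]}) (p : 'I_Ndim -> C) : Prop :=
  (\rank (jacSigma F p) < 2)%N.

Definition tangent (F : {mpoly R[n]}) (p : 'I_Ndim -> C) (v : 'cV[C]_Ndim) : Prop :=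
  jacSigma F p *m v = 0.

Definition proj (p : 'I_Ndim -> C) : 'I_n.+2 -> C := fun i => p (lshift n.+1 i).

Definition submersion_at (F : {mpoly R[n]}) (p : 'I_Ndim -> C) : Prop :=
  forall w : 'I_n.+2 -> C, exists v : 'cV[C]_Ndim,
    tangent F p v /\ forall i : 'I_n.+2, v (lshift n.+1 i) ord0 = w i.

Definition critical_value (F : {mpoly R[n]}) (xt : 'I_n.+2 -> C) : Prop :=
  exists p : 'I_Ndim -> C,
    [/\ Sigma F p, proj p = xt & (singular_pt F p \/ ~ submersion_at F p)].

(* wave front W_t with initial front Y *)
Definition wave_front (F : {mpoly R[n]}) (t : C) (x : 'I_n.+1 -> C) : Prop :=
  exists (z : 'I_n -> C) (u : C) (s : C) (eps : C),
    [/\ (FC F).@[z] + u = 0,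
        s ^+ 2 = 1 + \sum_(j < n) ((mderiv j (FC F)).@[z]) ^+ 2,
        s != 0,
        (eps = 1 \/ eps = -1) &
        ((forall j : 'I_n,
            x (xpidx j) = eps * t * s^-1 * (mderiv j (FC F)).@[z] + z j) /\
         x ord_max = eps * t * s^-1 + u)].

End WaveFront.

Definition xt_pt (R : realType) (n : nat) (x : 'I_n.+1 -> complex R) (t : complex R)
  : 'I_n.+2 -> complex R :=
  fun i => if unlift ord_max i is Some j then x j else t.

From mathcomp Require Import all_boot all_algebra.
From mathcomp Require Import mpoly complex reals ring.
From mathcomp Require boolp.
Set Implicit Arguments. Unset Strict Implicit. Unset Printing Implicit Defensive.
Import GRing.Theory Num.Theory.
Local Open Scope ring_scope.

(* Let p = (x, t, z, u) be the point of Sigma lying over a wave-front point,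
   with s^2 = 1 + |d_zF(z)|^2 and x' - z = eps t d_zF(z) / s.  The linear form
   S = <x' - z, d_zF(z)> + x_{n+1} - u then equals eps t s, so
   psi = S^2 - t^2 s^2 vanishes at p.  If t = 0, then S(p) = 0 and the whole
   differential of psi vanishes at p, so p is a singular point of Sigma.
   If t <> 0, take a tangent vector v of Sigma with no x-component and
   t-component 1: the condition dF(v_z) + v_u = 0 coming from Y kills the
   first-order part of dS(v), and the second-order terms of 2 S dS(v) and of
   t^2 d(s^2)(v) cancel, leaving d psi(v) = -2 t s^2 <> 0.  Hence d pi cannot
   reach the direction of t, and pi|Sigma is not a submersion at p. *)

Lemma meval_mderivX (C : comNzRingType) N (i j : 'I_N) (w : 'I_N -> C) :
  (mderiv i 'X_j).@[w] = (j == i)%:R.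
Proof.
rewrite mderivX mevalZ mevalX mnm1E; case: eqP => [->|_]; last by rewrite mul0r.
by rewrite mul1r big1 // => k _; rewrite mnmBE subnn expr0.
Qed.

Section DirectionalDerivative.
Variables (C : comNzRingType) (N : nat) (p v : 'I_N -> C).

Definition mdirderiv (P : {mpoly C[N]}) : C := \sum_i (mderiv i P).@[p] * v i.

Lemma mdirderivD P Q : mdirderiv (P + Q) = mdirderiv P + mdirderiv Q.
Proof.
by rewrite /mdirderiv -big_split; apply: eq_bigr => i _; rewrite mderivD mevalD mulrDl.
Qed.

Lemma mdirderivN P : mdirderiv (- P) = - mdirderiv P.
Proof.
by rewrite /mdirderiv -sumrN; apply: eq_bigr => i _; rewrite mderivN mevalN mulNr.
Qed.

Lemma mdirderivB P Q : mdirderiv (P - Q) = mdirderiv P - mdirderiv Q.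
Proof. by rewrite mdirderivD mdirderivN. Qed.

Lemma mdirderivZ c P : mdirderiv (c *: P) = c * mdirderiv P.
Proof.
by rewrite /mdirderiv mulr_sumr; apply: eq_bigr => i _; rewrite mderivZ mevalZ mulrA.
Qed.

Lemma mdirderivM P Q :
  mdirderiv (P * Q) = mdirderiv P * Q.@[p] + P.@[p] * mdirderiv Q.
Proof.
rewrite /mdirderiv mulr_suml mulr_sumr -big_split; apply: eq_bigr => i _.
by rewrite mderivM mevalD !mevalM /=; ring.
Qed.

Lemma mdirderiv_sqr P : mdirderiv (P ^+ 2) = 2 * P.@[p] * mdirderiv P.
Proof. by rewrite expr2 mdirderivM; ring. Qed.

Lemma mdirderivC c : mdirderiv c%:MP = 0.
Proof. by rewrite /mdirderiv big1 // => i _; rewrite mderivC meval0 mul0r. Qed.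

Lemma mdirderiv0 : mdirderiv 0 = 0.
Proof. by rewrite -mpolyC0 mdirderivC. Qed.

Lemma mdirderiv1 : mdirderiv 1 = 0.
Proof. exact: mdirderivC. Qed.

Lemma mdirderiv_sum k (P : 'I_k -> {mpoly C[N]}) :
  mdirderiv (\sum_(j < k) P j) = \sum_(j < k) mdirderiv (P j).
Proof. exact: (big_morph _ mdirderivD mdirderiv0). Qed.

Lemma mdirderivX j : mdirderiv 'X_j = v j.
Proof.
rewrite /mdirderiv (bigD1 j) //= big1 ?addr0 => [|k /negbTE hk];
  by rewrite meval_mderivX ?eqxx ?mul1r // eq_sym hk mul0r.
Qed.

Section ChainRule.
Variables (k : nat) (Q : k.-tuple {mpoly C[N]}).

Let chain_rule_holds (P : {mpoly C[k]}) :=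
  mdirderiv (P \mPo Q) =
  \sum_(j < k) (mderiv j P).@[fun a => (tnth Q a).@[p]] * mdirderiv (tnth Q j).

Let chain_ruleD P1 P2 :
  chain_rule_holds P1 -> chain_rule_holds P2 -> chain_rule_holds (P1 + P2).
Proof.
move=> h1 h2; rewrite /chain_rule_holds comp_mpolyD mdirderivD h1 h2 -big_split.
by apply: eq_bigr => j _; rewrite mderivD mevalD mulrDl.
Qed.

Let chain_ruleM P1 P2 :
  chain_rule_holds P1 -> chain_rule_holds P2 -> chain_rule_holds (P1 * P2).
Proof.
move=> h1 h2; rewrite /chain_rule_holds rmorphM mdirderivM h1 h2 !comp_mpoly_meval.
rewrite mulr_suml mulr_sumr -big_split; apply: eq_bigr => j _.
by rewrite mderivM mevalD !mevalM /=; ring.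
Qed.

Let chain_ruleC c : chain_rule_holds c%:MP.
Proof.
rewrite /chain_rule_holds comp_mpolyC mdirderivC big1 // => j _.
by rewrite mderivC meval0 mul0r.
Qed.

Let chain_ruleX i : chain_rule_holds 'X_i.
Proof.
rewrite /chain_rule_holds comp_mpolyXU -tnth_nth (bigD1 i) //= big1 ?addr0
  => [|j /negbTE hj]; by rewrite meval_mderivX ?eqxx ?mul1r // eq_sym hj mul0r.
Qed.

Let chain_rule_monomial m : chain_rule_holds 'X_[m].
Proof.
rewrite mpolyXE_id; apply: (big_ind chain_rule_holds) => // [|i _].
  exact: (chain_ruleC 1).
elim: (m i) => [|e IHe]; first by rewrite expr0; exact: (chain_ruleC 1).
by rewrite exprS; apply: chain_ruleM.
Qed.

Lemma mdirderiv_comp P :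
  mdirderiv (P \mPo Q) =
  \sum_(j < k) (mderiv j P).@[fun a => (tnth Q a).@[p]] * mdirderiv (tnth Q j).
Proof.
elim/mpolyind: P => [|c m P _ _ IHP].
  by rewrite comp_mpoly0 mdirderiv0 big1 // => j _; rewrite mderiv0 meval0 mul0r.
rewrite -/(chain_rule_holds _); apply: chain_ruleD => //.
rewrite /chain_rule_holds comp_mpolyZ mdirderivZ chain_rule_monomial mulr_sumr.
by apply: eq_bigr => j _; rewrite mderivZ mevalZ mulrA.
Qed.

End ChainRule.
End DirectionalDerivative.

Lemma mdirderiv_delta (C : comNzRingType) N (p : 'I_N -> C) i P :
  mdirderiv p (fun j => (j == i)%:R) P = (mderiv i P).@[p].
Proof.
rewrite /mdirderiv (bigD1 i) //= eqxx mulr1 big1 ?addr0 // => j /negbTE ->.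
exact: mulr0.
Qed.

Lemma widen_ord_lift m (j : 'I_m) : widen_ord (leqnSn m) j = lift ord_max j.
Proof. exact/val_inj/esym/lift_max. Qed.

Section WaveFrontPoint.
Variables (R : realType) (n : nat) (F : {mpoly R[n]}).
Local Notation C := (complex R).
Variables (x : 'I_n.+1 -> C) (t : C) (z : 'I_n -> C) (u : C).

Definition ambient_pt : 'I_(Ndim n) -> C := fun i =>
  match @split n.+2 n.+1 i with
  | inl a => xt_pt x t a
  | inr b => if unlift ord_max b is Some k then z k else u
  end.

Local Notation p := ambient_pt.

Lemma ambient_pt_x j : p (xidx j) = x j.
Proof. by rewrite /p /xidx (unsplitK (inl _)) /xt_pt widen_ord_lift liftK. Qed.

Lemma ambient_pt_t : p (tidx n) = t.
Proof. by rewrite /p /tidx (unsplitK (inl _)) /xt_pt unlift_none. Qed.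

Lemma ambient_pt_z j : p (zidx j) = z j.
Proof. by rewrite /p /zidx (unsplitK (inr _)) widen_ord_lift liftK. Qed.

Lemma ambient_pt_u : p (uidx n) = u.
Proof. by rewrite /p /uidx (unsplitK (inr _)) unlift_none. Qed.

Lemma proj_ambient_pt : proj p = xt_pt x t.
Proof. by apply: boolp.funext => i; rewrite /proj /p (unsplitK (inl _)). Qed.

Lemma meval_comp_zvars (P : {mpoly C[n]}) : (P \mPo zvars R n).@[p] = P.@[z].
Proof.
rewrite comp_mpoly_meval; apply: meval_eq => j.
by rewrite tnth_mktuple mevalXU ambient_pt_z.
Qed.

Local Notation dF j := (mderiv j (FC F)).@[z].

Lemma meval_dFz j : (dFz F j).@[p] = dF j.
Proof. exact: meval_comp_zvars. Qed.

Definition psi_lin : {mpoly C[Ndim n]} :=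
  \sum_(j < n) ('X_(xidx (xpidx j)) - 'X_(zidx j)) * dFz F j
    + 'X_(xidx ord_max) - 'X_(uidx n).

Definition psi_norm : {mpoly C[Ndim n]} := 1 + \sum_(j < n) dFz F j ^+ 2.

Lemma psiE : psi F = psi_lin ^+ 2 - 'X_(tidx n) ^+ 2 * psi_norm.
Proof. by []. Qed.

Lemma meval_psi_norm : psi_norm.@[p] = 1 + \sum_(j < n) dF j ^+ 2.
Proof.
rewrite /psi_norm mevalD meval1 (big_morph _ (mevalD p) (meval0 p)).
by congr (_ + _); apply: eq_bigr => j _; rewrite rmorphXn /= meval_dFz.
Qed.

Section Derivatives.
Variable v : 'I_(Ndim n) -> C.

Lemma mdirderiv_G_Y :
  mdirderiv p v (G_Y F) = \sum_(j < n) dF j * v (zidx j) + v (uidx n).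
Proof.
rewrite /G_Y mdirderivD mdirderivX /Fz mdirderiv_comp; congr (_ + _).
apply: eq_bigr => j _; rewrite tnth_mktuple mdirderivX; congr (_ * _).
by apply: meval_eq => i; rewrite tnth_mktuple mevalXU ambient_pt_z.
Qed.

Lemma mdirderiv_psi_lin :
  mdirderiv p v psi_lin =
  \sum_(j < n) ((v (xidx (xpidx j)) - v (zidx j)) * dF j
                + (x (xpidx j) - z j) * mdirderiv p v (dFz F j))
  + v (xidx ord_max) - v (uidx n).
Proof.
rewrite /psi_lin mdirderivB mdirderivD mdirderiv_sum !mdirderivX.
congr (_ + _ - _); apply: eq_bigr => j _.
by rewrite mdirderivM mdirderivB !mdirderivX meval_dFz mevalB !mevalXU
  ambient_pt_x ambient_pt_z.
Qed.

Lemma mdirderiv_psi_norm :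
  mdirderiv p v psi_norm = \sum_(j < n) 2 * dF j * mdirderiv p v (dFz F j).
Proof.
rewrite /psi_norm mdirderivD mdirderiv1 add0r mdirderiv_sum.
by apply: eq_bigr => j _; rewrite mdirderiv_sqr meval_dFz.
Qed.

Lemma mdirderiv_psi :
  mdirderiv p v (psi F) =
  2 * psi_lin.@[p] * mdirderiv p v psi_lin
  - (2 * t * v (tidx n) * psi_norm.@[p] + t ^+ 2 * mdirderiv p v psi_norm).
Proof.
by rewrite psiE mdirderivB mdirderiv_sqr mdirderivM mdirderiv_sqr rmorphXn /=
  mevalXU ambient_pt_t mdirderivX.
Qed.

End Derivatives.

Variables (s eps : C).
Hypotheses (hY : (FC F).@[z] + u = 0)
           (hs : s ^+ 2 = 1 + \sum_(j < n) dF j ^+ 2)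
           (s_neq0 : s != 0) (heps : eps = 1 \/ eps = -1)
           (hx' : forall j, x (xpidx j) = eps * t * s^-1 * dF j + z j)
           (hxn : x ord_max = eps * t * s^-1 + u).

Lemma meval_psi_lin : psi_lin.@[p] = eps * t * s.
Proof.
have sum_dF2 : \sum_(j < n) dF j ^+ 2 = s ^+ 2 - 1 by rewrite hs; ring.
rewrite /psi_lin mevalB mevalD (big_morph _ (mevalD p) (meval0 p)) !mevalXU.
rewrite (eq_bigr (fun j => eps * t / s * dF j ^+ 2)) => [|j _].
  by rewrite -mulr_sumr sum_dF2 ambient_pt_x ambient_pt_u hxn; field.
by rewrite mevalM mevalB !mevalXU ambient_pt_x ambient_pt_z meval_dFz hx' addrK
  expr2 mulrA.
Qed.

Lemma Sigma_ambient_pt : Sigma F p.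
Proof.
have eps2 : eps ^+ 2 = 1 by case: heps => ->; ring.
case=> [[|[|//]] k]; rewrite /Geq /=.
  by rewrite /G_Y mevalD meval_comp_zvars mevalXU ambient_pt_u hY.
rewrite psiE mevalB !mevalM meval_psi_lin meval_psi_norm -hs mevalXU ambient_pt_t.
by rewrite -(mul1r (t * t * _)) -eps2; ring.
Qed.

Lemma mdirderiv_psi_t0 v : t = 0 -> mdirderiv p v (psi F) = 0.
Proof. by move=> t0; rewrite mdirderiv_psi meval_psi_lin t0; ring. Qed.

Lemma mdirderiv_psi_vertical v :
  (forall j, v (xidx j) = 0) -> mdirderiv p v (G_Y F) = 0 ->
  mdirderiv p v (psi F) = - (2 * t * v (tidx n) * s ^+ 2).
Proof.
move=> vx0; rewrite mdirderiv_G_Y => hYv.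
pose dd := \sum_(j < n) dF j * mdirderiv p v (dFz F j).
have dpsi_lin : mdirderiv p v psi_lin = eps * t / s * dd.
  rewrite mdirderiv_psi_lin vx0 addr0 (eq_bigr (fun j =>
    eps * t / s * (dF j * mdirderiv p v (dFz F j)) - dF j * v (zidx j))).
    by rewrite sumrB -mulr_sumr -addrA -opprD hYv subr0.
  by move=> j _; rewrite vx0 hx' /=; ring.
have dpsi_norm : mdirderiv p v psi_norm = 2 * dd.
  by rewrite mdirderiv_psi_norm /dd mulr_sumr; apply: eq_bigr => j _; ring.
rewrite mdirderiv_psi meval_psi_lin meval_psi_norm -hs dpsi_lin dpsi_norm.
by case: heps => ->; field.
Qed.

Lemma singular_ambient_pt : t = 0 -> singular_pt F p.
Proof.
move=> t0; rewrite /singular_pt.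
have -> : jacSigma F p = delta_mx ord0 ord0 *m jacSigma F p.
  apply/matrixP => k i; rewrite !mxE big_ord_recl big_ord1 !mxE.
  case: k => [[|[|//]] hk] /=.
    by rewrite (_ : Ordinal hk = ord0) ?mul1r ?mul0r ?addr0 //; apply: val_inj.
  by rewrite !mul0r addr0 -mdirderiv_delta /Geq /= mdirderiv_psi_t0.
by rewrite (leq_ltn_trans (mxrankM_maxl _ _)) // mxrank_delta.
Qed.

Lemma tangent_mdirderiv v k :
  tangent F p v -> mdirderiv p (fun i => v i ord0) (Geq F k) = 0.
Proof.
move=> /(congr1 (fun M : 'cV_2 => M k ord0)); rewrite !mxE => <-.
by apply: eq_bigr => i _; rewrite mxE.
Qed.

Lemma not_submersion_ambient_pt : t != 0 -> ~ submersion_at F p.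
Proof.
move=> t_neq0 /(_ (fun i => (i == ord_max)%:R)) [v [tv vproj]].
have vx0 j : v (xidx j) ord0 = 0.
  by rewrite vproj widen_ord_lift eq_sym (negbTE (neq_lift _ _)).
have vt1 : v (tidx n) ord0 = 1 by rewrite vproj eqxx.
have := tangent_mdirderiv ord_max tv; rewrite /Geq /=.
rewrite mdirderiv_psi_vertical // ?vt1; last exact: (tangent_mdirderiv ord0 tv).
apply/eqP; rewrite oppr_eq0 mulr1 !mulf_neq0 ?expf_neq0 //.
by rewrite pnatr_eq0.
Qed.

End WaveFrontPoint.

Theorem lemma1 (R : realType) (n : nat) (F : {mpoly R[n]})
  (x : 'I_n.+1 -> complex R) (t : complex R) :
  (1 <= n)%N ->
  wave_front F t x ->
  critical_value F (xt_pt x t).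
Proof.
move=> _ [z [u [s [eps [hY hs s_neq0 heps [hx' hxn]]]]]].
exists (ambient_pt x t z u); split.
- exact: (Sigma_ambient_pt hY hs s_neq0 heps hx' hxn).
- exact: proj_ambient_pt.
case: (eqVneq t 0) => [t0|t_neq0].
  by left; apply: (singular_ambient_pt hs s_neq0 hx' hxn).
by right; apply: (not_submersion_ambient_pt hs s_neq0 heps hx' hxn).
Qed.
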